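(* Let $\mathcal B$ be a building set on a finite set $S\subset\mathbb N$ of even cardinality. If $\mathcal B$ has a connected component of odd cardinality, then there is no alternating $\mathcal B$-permutation.
   Context: A building set on a finite set $S\subset\mathbb N$ is a collection $\mathcal B$ of nonempty subsets of $S$ containing every singleton $\{i\}$, $i\in S$, such that $I,J\in\mathcal B$ and $I\cap J\neq\emptyset$ imply $I\cup J\in\mathcal B$. Its connected components are the inclusion-maximal elements of $\mathcal B$. For $I\subseteq S$, $\mathcal B|_I=\{J\in\mathcal B:J\subseteq I\}$. For a building set $\mathcal B$ on $S$ with $|S|=m$, a $\mathcal B$-permutation is a sequence $(x_1x_2\cdots x_m)$ listing each element of $S$ exactly once such that for each $1\le i\le m$, $x_i$ and $\max\{x_1,\dots,x_i\}$ lie in the same connected component of $\mathcal B|_{\{x_1,\dots,x_i\}}$. It is alternating if $x_1>x_2<x_3>x_4<\cdots$. *)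

From mathcomp Require Import all_boot all_order.
From mathcomp Require Import finmap.
Set Implicit Arguments. Unset Strict Implicit. Unset Printing Implicit Defensive.
Local Open Scope fset_scope.

Definition building_set (S : {fset nat}) (B : {fset {fset nat}}) : Prop :=
  [/\ (forall I, I \in B -> I != fset0 /\ I `<=` S),
      (forall i, i \in S -> [fset i] \in B) &
      (forall I J, I \in B -> J \in B -> I `&` J != fset0 -> I `|` J \in B)].

Definition restrict (B : {fset {fset nat}}) (I : {fset nat}) : {fset {fset nat}} :=
  [fset J in B | J `<=` I].

Definition is_component (B : {fset {fset nat}}) (C : {fset nat}) : Prop :=
  C \in B /\ (forall J, J \in B -> C `<=` J -> J = C).

Definition same_component (B : {fset {fset nat}}) (x y : nat) : Prop :=
  exists C, is_component B C /\ x \in C /\ y \in C.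

(* s = (x_1 ... x_m) is a B-permutation: lists each element of S exactly once,
   and for each 1 <= i <= m, x_i and max{x_1..x_i} lie in the same component
   of B|_{x_1..x_i}.  (0-indexed: x_i = nth 0 s i.-1, prefix = take i s.) *)
Definition B_perm (S : {fset nat}) (B : {fset {fset nat}}) (s : seq nat) : Prop :=
  uniq s /\ (forall x, x \in s = (x \in S)) /\
  forall i, 1 <= i <= size s ->
    same_component (restrict B [fset x | x in take i s])
                   (nth 0 s i.-1) (\max_(x <- take i s) x).

(* x_1 > x_2 < x_3 > x_4 < ... (0-indexed: position j even => s_j > s_{j+1}) *)
Definition alternating (s : seq nat) : Prop :=
  forall j, j.+1 < size s ->
    if ~~ odd j then nth 0 s j > nth 0 s j.+1 else nth 0 s j < nth 0 s j.+1.

(** An alternating permutation pairs up positions 2k+1, 2k+2, and since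
  x_{2k+2} < x_{2k+1} both prefixes have the same maximum M.  The permutation
  condition puts x_{2k+1} and M, and also x_{2k+2} and M, into common blocks
  of B; a connected component contains every block it meets, so x_{2k+1} and
  x_{2k+2} lie in the same components.  When |S| is even these pairs cover S,
  hence every component has even cardinality. *)
From mathcomp Require Import all_boot all_order.
From mathcomp Require Import finmap.
Local Open Scope fset_scope.

Lemma component_absorbs {S : {fset nat}} {B : {fset {fset nat}}} {C J : {fset nat}} {x} :
  building_set S B -> is_component B C -> J \in B -> x \in J -> x \in C ->
  J `<=` C.
Proof.
move=> [_ _ unionB] [CB Cmax] JB xJ xC.
have CJ_meet : C `&` J != fset0 by apply/fset0Pn; exists x; rewrite in_fsetI xC xJ.
by rewrite -(Cmax _ (unionB _ _ CB JB CJ_meet) (fsubsetUl C J)) fsubsetUr.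
Qed.

Lemma same_component_mem {S : {fset nat}} {B : {fset {fset nat}}} {I C : {fset nat}} {x y} :
  building_set S B -> is_component B C ->
  same_component (restrict B I) x y -> (x \in C) = (y \in C).
Proof.
move=> buildB compC [J [[JB _] [xJ yJ]]].
have {}JB : J \in B by move: JB; rewrite inE => /andP[].
apply/idP/idP => [xC | yC].
- exact: (fsubsetP (component_absorbs buildB compC JB xJ xC)) _ yJ.
- exact: (fsubsetP (component_absorbs buildB compC JB yJ yC)) _ xJ.
Qed.

Lemma alternating_max_take (s : seq nat) k :
  alternating s -> k.*2.+1 < size s ->
  \max_(x <- take k.*2.+2 s) x = \max_(x <- take k.*2.+1 s) x.
Proof.
move=> alt_s ltks.
rewrite (take_nth 0 ltks) -cats1 big_cat big_seq1 /=; apply/maxn_idPl.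
have descent := alt_s _ ltks; rewrite odd_double /= in descent.
apply: leq_trans (ltnW descent) _; apply: leq_bigmax_seq => //.
by rewrite -(nth_take 0 (ltnSn k.*2)) mem_nth // size_take ltks.
Qed.

Lemma alternating_B_perm_pair_mem {S : {fset nat}} {B : {fset {fset nat}}} {C : {fset nat}} {s} :
  building_set S B -> is_component B C -> B_perm S B s -> alternating s -> forall k,
  k.*2.+1 < size s -> (nth 0 s k.*2 \in C) = (nth 0 s k.*2.+1 \in C).
Proof.
move=> buildB compC [_ [_ permB]] alt_s k ltks.
have odd_pos := same_component_mem buildB compC (permB k.*2.+1 (ltnW ltks)).
have even_pos := same_component_mem buildB compC (permB k.*2.+2 ltks).
by rewrite /= in odd_pos even_pos; rewrite odd_pos -alternating_max_take.
Qed.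

Lemma count_pairs_even {T : Type} (p : pred T) x0 (s : seq T) :
  ~~ odd (size s) ->
  (forall k, k.*2.+1 < size s -> p (nth x0 s k.*2) = p (nth x0 s k.*2.+1)) ->
  ~~ odd (count p s).
Proof.
elim: {s}(size s)./2 {-2}s (erefl (size s)./2) => [|n IH] [|a [|b t]] //= size_t.
move=> even_t pairs; rewrite addnA -(pairs 0 isT) addnn oddD odd_double /=.
apply: IH => [||k ltkt]; [by case: size_t | by rewrite !negbK in even_t |].
by apply: (pairs k.+1); rewrite doubleS !ltnS.
Qed.

Lemma count_mem_fsubset {A S : {fset nat}} {s : seq nat} :
  uniq s -> (forall x, x \in s = (x \in S)) -> A `<=` S ->
  count [in A] s = #|` A|.
Proof.
move=> uniq_s mem_s AS; rewrite -size_filter; apply/perm_size/uniq_perm.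
- exact: filter_uniq.
- exact: fset_uniq.
move=> x; rewrite mem_filter mem_s /=.
by case xA: (x \in A); rewrite ?(fsubsetP AS x xA).
Qed.

Theorem proposition4p2 (S : {fset nat}) (B : {fset {fset nat}}) :
  building_set S B ->
  ~~ odd #|` S| ->
  (exists C, is_component B C /\ odd #|` C|) ->
  ~ (exists s : seq nat, B_perm S B s /\ alternating s).
Proof.
move=> buildB even_S [C [compC odd_C]] [s [permB alt_s]].
have [uniq_s [mem_s _]] := permB.
have CS : C `<=` S by case: buildB => blocks _ _; case: (blocks _ compC.1).
have size_s : size s = #|` S|.
  by apply/perm_size/uniq_perm => //; exact: fset_uniq.
have even_s : ~~ odd (size s) by rewrite size_s.
have := count_pairs_even [in C] 0 s even_s
  (alternating_B_perm_pair_mem buildB compC permB alt_s).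
by rewrite (count_mem_fsubset uniq_s mem_s CS) odd_C.
Qed.
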